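(* If $f$ satisfies the rate conditions of order $0$ and $z_1,z_2\in D$ satisfy $z_1\in J_u(z_2,1/L)$, then $\|\pi_x(f(z_1)-f(z_2))\|\ge\xi_{u,1,P}\|\pi_x(z_1-z_2)\|$.
   Context: $c,u,s$ positive integers, $\Lambda=(\mathbb{R}/\mathbb{Z})^c$, $R_\Lambda=\tfrac12$; points are ''in the same chart'' if their $\lambda$-components have lifts to $\mathbb{R}^c$ at distance $\le R_\Lambda$; differences, norms, cones and derivatives are computed in such lifts. $\overline B_n(R)$ closed ball at $0$; Euclidean norms. $0<R<R_\Lambda/2$, $D=\Lambda\times\overline B_u(R)\times\overline B_s(R)$, $z=(\lambda,x,y)$, projections $\pi_\lambda,\pi_x,\pi_y,\pi_{(\lambda,y)}$; $f:D\to\Lambda\times\mathbb{R}^u\times\mathbb{R}^s$ is $C^1$, $f=(f_\lambda,f_x,f_y)$. $m(A)=\max\{c:\|Av\|\ge c\|v\|\}$, $m(\mathbf A)=\inf_{A\in\mathbf A}m(A)$; $[\partial g/\partial w(U)]$ = set of matrices with $(i,j)$ entry in $[\inf_U\partial g_i/\partial w_j,\sup_U\partial g_i/\partial w_j]$; $P(z)=\{w\in D:\|\pi_\lambda w-\pi_\lambda z\|\le R_\Lambda/2\}$. Fix $L\in(2R/R_\Lambda,1)$. $\mu_{s,1}=\sup_D\{\|\partial_yf_y\|+\frac1L\|\partial_{(\lambda,x)}f_y\|\}$, $\xi_{u,1,P}=\inf_{z\in D}m[\partial_xf_x(P(z))]-\frac1L\sup_D\|\partial_{(\lambda,y)}f_x\|$,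 $\mu_{cs,1}=\sup_D\{\|\partial_{(\lambda,y)}f_{(\lambda,y)}\|+L\|\partial_xf_{(\lambda,y)}\|\}$, $\xi_{cu,1,P}=\inf_{z\in D}m[\partial_{(\lambda,x)}f_{(\lambda,x)}(P(z))]-L\sup_D\|\partial_yf_{(\lambda,x)}\|$. Rate conditions of order $0$: $\mu_{s,1}<1<\xi_{u,1,P}$, $\mu_{cs,1}<\xi_{u,1,P}$, $\mu_{s,1}<\xi_{cu,1,P}$. $J_u(z,M)=\{(\lambda,x,y):\|(\lambda,y)-\pi_{(\lambda,y)}z\|\le M\|x-\pi_xz\|\}$. *)

From mathcomp Require Import all_boot all_order all_algebra.
From mathcomp Require Import boolp classical_sets reals.

Set Implicit Arguments.
Unset Strict Implicit.
Unset Printing Implicit Defensive.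

Import Order.TTheory GRing.Theory Num.Theory.
Local Open Scope classical_set_scope.
Local Open Scope ring_scope.

Section Defs.
Variable R : realType.

Definition enorm n (v : 'cV[R]_n) : R := Num.sqrt (\sum_i (v i ord0) ^+ 2).

Definition opnorm m n (A : 'M[R]_(m, n)) : R :=
  sup [set r | exists v : 'cV[R]_n, enorm v <= 1 /\ r = enorm (A *m v)].

Definition mlow m n (A : 'M[R]_(m, n)) : R :=
  sup [set c | forall v : 'cV[R]_n, c * enorm v <= enorm (A *m v)].

Definition mlow_set m n (AA : set 'M[R]_(m, n)) : R :=
  inf [set r | exists2 A, AA A & r = mlow A].

Definition ihull (T : Type) m n (G : T -> 'M[R]_(m, n)) (U : set T)
  : set 'M[R]_(m, n) :=
  [set A | forall i j,
     inf [set r | exists2 w, U w & r = G w i j] <= A i j /\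
     A i j <= sup [set r | exists2 w, U w & r = G w i j]].

(* Lifted points z = (lambda, x, y) in R^c x R^u x R^s
   (lambda is a lift to R^c of a lpoint of Lambda = (R/Z)^c). *)
Definition lpoint c u s : Type := ('cV[R]_c * 'cV[R]_u * 'cV[R]_s)%type.

Definition plam c u s (z : lpoint c u s) : 'cV[R]_c := z.1.1.
Definition px c u s (z : lpoint c u s) : 'cV[R]_u := z.1.2.
Definition py c u s (z : lpoint c u s) : 'cV[R]_s := z.2.

Definition psub c u s (z w : lpoint c u s) : lpoint c u s :=
  (plam z - plam w, px z - px w, py z - py w).

Definition pnorm c u s (z : lpoint c u s) : R :=
  Num.sqrt (enorm (plam z) ^+ 2 + enorm (px z) ^+ 2 + enorm (py z) ^+ 2).

Definition intv c (k : 'cV[int]_c) : 'cV[R]_c := map_mx (fun n : int => n%:~R) k.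

Definition Dom c u s (Rr : R) : set (lpoint c u s) :=
  [set z | enorm (px z) <= Rr /\ enorm (py z) <= Rr].

(* P(z) = { w in D : |pi_lambda w - pi_lambda z| <= R_Lambda/2 = 1/4 },
   in lifted coordinates (the derivative of a lift is Z^c-periodic in lambda). *)
Definition Pset c u s (Rr : R) (z : lpoint c u s) : set (lpoint c u s) :=
  [set w | Dom Rr w /\ enorm (plam w - plam z) <= 4^-1].

(* derivative of a lift, as its nine blocks; d_ij = d f_i / d w_j *)
Record deriv9 c u s := Deriv9 {
  dll : 'M[R]_(c, c); dlx : 'M[R]_(c, u); dly : 'M[R]_(c, s);
  dxl : 'M[R]_(u, c); dxx : 'M[R]_(u, u); dxy : 'M[R]_(u, s);
  dyl : 'M[R]_(s, c); dyx : 'M[R]_(s, u); dyy : 'M[R]_(s, s) }.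

Definition dapply c u s (d : deriv9 c u s) (v : lpoint c u s) : lpoint c u s :=
  (dll d *m plam v + dlx d *m px v + dly d *m py v,
   dxl d *m plam v + dxx d *m px v + dxy d *m py v,
   dyl d *m plam v + dyx d *m px v + dyy d *m py v).

Definition mxdist m n (A B : 'M[R]_(m, n)) : R := \sum_i \sum_j `|A i j - B i j|.

Definition d9dist c u s (d e : deriv9 c u s) : R :=
  mxdist (dll d) (dll e) + mxdist (dlx d) (dlx e) + mxdist (dly d) (dly e) +
  mxdist (dxl d) (dxl e) + mxdist (dxx d) (dxx e) + mxdist (dxy d) (dxy e) +
  mxdist (dyl d) (dyl e) + mxdist (dyx d) (dyx e) + mxdist (dyy d) (dyy e).

Definition is_lift c u s (Rr : R) (F : lpoint c u s -> lpoint c u s) : Prop :=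
  forall z, Dom Rr z -> forall k : 'cV[int]_c,
    let zk := (plam z + intv k, px z, py z) in
    px (F zk) = px (F z) /\ py (F zk) = py (F z) /\
    exists k' : 'cV[int]_c, plam (F zk) = plam (F z) + intv k'.

Definition is_C1_with c u s (Rr : R) (F : lpoint c u s -> lpoint c u s)
    (DF : lpoint c u s -> deriv9 c u s) : Prop :=
  (forall z, Dom Rr z -> forall eps : R, 0 < eps -> exists2 del : R, 0 < del &
     forall w, Dom Rr w -> pnorm (psub w z) < del ->
       pnorm (psub (psub (F w) (F z)) (dapply (DF z) (psub w z)))
         <= eps * pnorm (psub w z)) /\
  (forall z, Dom Rr z -> forall eps : R, 0 < eps -> exists2 del : R, 0 < del &
     forall w, Dom Rr w -> pnorm (psub w z) < del -> d9dist (DF w) (DF z) < eps).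

Definition d_y_fy c u s (d : deriv9 c u s) : 'M[R]_(s, s) := dyy d.
Definition d_lx_fy c u s (d : deriv9 c u s) : 'M[R]_(s, c + u) := row_mx (dyl d) (dyx d).
Definition d_x_fx c u s (d : deriv9 c u s) : 'M[R]_(u, u) := dxx d.
Definition d_ly_fx c u s (d : deriv9 c u s) : 'M[R]_(u, c + s) := row_mx (dxl d) (dxy d).
Definition d_ly_fly c u s (d : deriv9 c u s) : 'M[R]_(c + s, c + s) :=
  block_mx (dll d) (dly d) (dyl d) (dyy d).
Definition d_x_fly c u s (d : deriv9 c u s) : 'M[R]_(c + s, u) := col_mx (dlx d) (dyx d).
Definition d_lx_flx c u s (d : deriv9 c u s) : 'M[R]_(c + u, c + u) :=
  block_mx (dll d) (dlx d) (dxl d) (dxx d).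
Definition d_y_flx c u s (d : deriv9 c u s) : 'M[R]_(c + u, s) := col_mx (dly d) (dxy d).

Definition sup_D c u s (Rr : R) (g : lpoint c u s -> R) : R :=
  sup [set r | exists2 z, Dom Rr z & r = g z].
Definition inf_D c u s (Rr : R) (g : lpoint c u s -> R) : R :=
  inf [set r | exists2 z, Dom Rr z & r = g z].

Definition mu_s1 c u s (Rr L : R) (DF : lpoint c u s -> deriv9 c u s) : R :=
  sup_D Rr (fun z => opnorm (d_y_fy (DF z)) + L^-1 * opnorm (d_lx_fy (DF z))).

Definition xi_u1P c u s (Rr L : R) (DF : lpoint c u s -> deriv9 c u s) : R :=
  inf_D Rr (fun z => mlow_set (ihull (fun w => d_x_fx (DF w)) (Pset Rr z)))
  - L^-1 * sup_D Rr (fun z => opnorm (d_ly_fx (DF z))).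

Definition mu_cs1 c u s (Rr L : R) (DF : lpoint c u s -> deriv9 c u s) : R :=
  sup_D Rr (fun z => opnorm (d_ly_fly (DF z)) + L * opnorm (d_x_fly (DF z))).

Definition xi_cu1P c u s (Rr L : R) (DF : lpoint c u s -> deriv9 c u s) : R :=
  inf_D Rr (fun z => mlow_set (ihull (fun w => d_lx_flx (DF w)) (Pset Rr z)))
  - L * sup_D Rr (fun z => opnorm (d_y_flx (DF z))).

Definition rate_conditions0 c u s (Rr L : R) (DF : lpoint c u s -> deriv9 c u s) : Prop :=
  mu_s1 Rr L DF < 1 /\ 1 < xi_u1P Rr L DF /\
  mu_cs1 Rr L DF < xi_u1P Rr L DF /\ mu_s1 Rr L DF < xi_cu1P Rr L DF.

(* z1 in J_u(z2, M): differences of lambda computed in (some) lifts *)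
Definition in_Ju c u s (z2 : lpoint c u s) (M : R) (z1 : lpoint c u s) : Prop :=
  exists k : 'cV[int]_c,
    enorm (col_mx (plam z1 + intv k - plam z2) (py z1 - py z2))
      <= M * enorm (px z1 - px z2).

End Defs.

From mathcomp Require Import all_boot all_order all_algebra.
From mathcomp Require Import boolp classical_sets reals.
From mathcomp Require Import topology normedtype derive.
From mathcomp Require Import ring lra.
Import Order.TTheory GRing.Theory Num.Theory.
Import numFieldNormedType.Exports.
Local Open Scope classical_set_scope.
Local Open Scope ring_scope.
Set Implicit Arguments.
Unset Strict Implicit.
Unset Printing Implicit Defensive.

(* Shift z1 by the integer vector k witnessing z1 \in J_u(z2, 1/L) and pass
   through the corner zm = (lambda1 + k, x2, y1).  From z2 to zm only (lambda, y)
   moves: the mean value theorem for <g, pi_x f>, with g = pi_x (f zm - f z2),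
   gives |g| <= sup |d_(lambda,y) f_x| |D(lambda,y)| <= L^-1 sup |d_(lambda,y) f_x| |Dx|.
   From zm to the shifted z1 only x moves: the mean value theorem in each
   coordinate writes the increment as A Dx with A in the interval hull
   [d_x f_x (P(z1))], so its norm is at least m(A) |Dx|.  The triangle
   inequality combines both estimates.
   Since sup and inf are only meaningful on bounded sets, Df must also be
   bounded on D: it is continuous and Z^c-periodic in lambda (a lift commutes
   with integer shifts up to a locally constant integer vector, so derivatives
   at shifted points agree), hence bounded by compactness of a unit cell. *)

Section EuclideanNorm.
Variable R : realType.

Lemma norm_le_of_sqr_le (x y : R) : 0 <= y -> x ^+ 2 <= y ^+ 2 -> `|x| <= y.
Proof. by move=> y0 H; rewrite -ler_sqr ?nnegrE // real_normK ?num_real. Qed.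

Lemma le_of_sqr_le (x y : R) : 0 <= y -> x ^+ 2 <= y ^+ 2 -> x <= y.
Proof. by move=> y0 H; apply: le_trans (ler_norm x) (norm_le_of_sqr_le y0 H). Qed.

Lemma enorm_ge0 n (v : 'cV[R]_n) : 0 <= enorm v.
Proof. exact: sqrtr_ge0. Qed.

Lemma enorm_sqr n (v : 'cV[R]_n) : enorm v ^+ 2 = \sum_i (v i ord0) ^+ 2.
Proof. by rewrite /enorm sqr_sqrtr //; apply: sumr_ge0 => i _; rewrite sqr_ge0. Qed.

Lemma enorm0 n : enorm (0 : 'cV[R]_n) = 0.
Proof. by rewrite /enorm big1 ?sqrtr0 // => i _; rewrite mxE expr0n. Qed.

Lemma enorm_entry_le n (v : 'cV[R]_n) i : `|v i ord0| <= enorm v.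
Proof.
apply: norm_le_of_sqr_le; first exact: enorm_ge0.
rewrite enorm_sqr (bigD1 i) //= lerDl; apply: sumr_ge0 => j _; exact: sqr_ge0.
Qed.

Lemma enorm_eq0 n (v : 'cV[R]_n) : enorm v = 0 -> v = 0.
Proof.
move=> v0; apply/matrixP => i j; rewrite (ord1 j) mxE.
by apply/eqP; rewrite -normr_eq0 eq_le normr_ge0 andbT -v0 enorm_entry_le.
Qed.

Lemma enorm_le_l1 n (v : 'cV[R]_n) : enorm v <= \sum_i `|v i ord0|.
Proof.
have [sq_le l1_ge0] :
    \sum_i v i ord0 ^+ 2 <= (\sum_i `|v i ord0|) ^+ 2 /\ 0 <= \sum_i `|v i ord0|.
  elim/big_rec2: _ => [|i x y _ [H1 H2]]; first by rewrite expr0n /= lexx.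
  have E : `|v i ord0| ^+ 2 = v i ord0 ^+ 2 by rewrite real_normK ?num_real.
  have N0 : 0 <= `|v i ord0| by [].
  split; first by rewrite sqrrD E mulr2n; nra.
  by rewrite addr_ge0.
by apply: le_of_sqr_le; rewrite // enorm_sqr.
Qed.

Lemma enorm_col_mx m n (a : 'cV[R]_m) (b : 'cV[R]_n) :
  enorm (col_mx a b) ^+ 2 = enorm a ^+ 2 + enorm b ^+ 2.
Proof.
by rewrite !enorm_sqr big_split_ord /=; congr (_ + _); apply: eq_bigr => i _;
  rewrite ?col_mxEu ?col_mxEd.
Qed.

Lemma enorm_col_mxl m n (a : 'cV[R]_m) (b : 'cV[R]_n) : enorm a <= enorm (col_mx a b).
Proof. by apply: le_of_sqr_le; rewrite ?enorm_ge0 // enorm_col_mx lerDl sqr_ge0. Qed.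

Lemma enorm_col_mxr m n (a : 'cV[R]_m) (b : 'cV[R]_n) : enorm b <= enorm (col_mx a b).
Proof. by apply: le_of_sqr_le; rewrite ?enorm_ge0 // enorm_col_mx lerDr sqr_ge0. Qed.

Definition dot n (a b : 'cV[R]_n) : R := \sum_i a i ord0 * b i ord0.

Lemma enorm_sqr_dot n (a : 'cV[R]_n) : enorm a ^+ 2 = dot a a.
Proof. by rewrite enorm_sqr; apply: eq_bigr => i _; rewrite expr2. Qed.

Lemma dotC n (a b : 'cV[R]_n) : dot a b = dot b a.
Proof. by apply: eq_bigr => i _; rewrite mulrC. Qed.

Lemma dotDl n (a b w : 'cV[R]_n) : dot (a + b) w = dot a w + dot b w.
Proof. by rewrite /dot -big_split; apply: eq_bigr => i _; rewrite !mxE mulrDl. Qed.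

Lemma dotNl n (a w : 'cV[R]_n) : dot (- a) w = - dot a w.
Proof. by rewrite /dot -sumrN; apply: eq_bigr => i _; rewrite !mxE mulNr. Qed.

Lemma dotZl n t (a w : 'cV[R]_n) : dot (t *: a) w = t * dot a w.
Proof. by rewrite /dot mulr_sumr; apply: eq_bigr => i _; rewrite !mxE mulrA. Qed.

Lemma dotBl n (a b w : 'cV[R]_n) : dot (a - b) w = dot a w - dot b w.
Proof. by rewrite dotDl dotNl. Qed.

Lemma dotDr n (a b w : 'cV[R]_n) : dot w (a + b) = dot w a + dot w b.
Proof. by rewrite dotC dotDl !(dotC w). Qed.

Lemma dotBr n (a b w : 'cV[R]_n) : dot w (a - b) = dot w a - dot w b.
Proof. by rewrite dotC dotBl !(dotC w). Qed.

Lemma dotZr n t (a w : 'cV[R]_n) : dot w (t *: a) = t * dot w a.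
Proof. by rewrite dotC dotZl dotC. Qed.

Lemma dotr0 n (a : 'cV[R]_n) : dot a 0 = 0.
Proof. by rewrite /dot big1 // => i _; rewrite mxE mulr0. Qed.

Lemma dot_delta n (i : 'I_n) (x : 'cV[R]_n) : dot (delta_mx i 0) x = x i ord0.
Proof.
rewrite /dot (bigD1 i) //= big1 ?addr0 ?mxE ?eqxx ?mul1r //.
by move=> j /negbTE ji; rewrite mxE ji mul0r.
Qed.

Lemma cauchy_schwarz n (a b : 'cV[R]_n) : `|dot a b| <= enorm a * enorm b.
Proof.
apply: norm_le_of_sqr_le; first by rewrite mulr_ge0 ?enorm_ge0.
rewrite exprMn !enorm_sqr_dot.
have [/enorm_eq0 ->|bn0] := eqVneq (enorm b) 0; first by rewrite !dotr0 expr0n mulr0.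
set A := dot a a; set B := dot b b; set C := dot a b.
have B_gt0 : 0 < B by rewrite /B -enorm_sqr_dot exprn_gt0 // lt_def bn0 enorm_ge0.
(* expand 0 <= |B a - C b|^2 = B (A B - C^2) *)
have : 0 <= dot (B *: a - C *: b) (B *: a - C *: b) by rewrite -enorm_sqr_dot sqr_ge0.
rewrite dotBr !dotBl !dotZl !dotZr [dot b a]dotC -/A -/B -/C; nra.
Qed.

Lemma ler_enormD n (a b : 'cV[R]_n) : enorm (a + b) <= enorm a + enorm b.
Proof.
apply: le_of_sqr_le; first by rewrite addr_ge0 ?enorm_ge0.
rewrite enorm_sqr_dot dotDl !dotDr [dot b a]dotC -!enorm_sqr_dot.
have := cauchy_schwarz a b; rewrite ler_norml => /andP[_ H].
rewrite sqrrD mulr2n; lra.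
Qed.

Lemma enormZ n t (a : 'cV[R]_n) : enorm (t *: a) = `|t| * enorm a.
Proof.
apply/eqP; rewrite -(eqrXn2 (n:=2)) //; rewrite ?mulr_ge0 ?enorm_ge0 //.
by rewrite exprMn !enorm_sqr_dot dotZl dotC dotZl mulrA real_normK ?num_real // expr2.
Qed.

Lemma enormN n (a : 'cV[R]_n) : enorm (- a) = enorm a.
Proof. by rewrite -scaleN1r enormZ normrN normr1 mul1r. Qed.

Lemma enorm_distC n (a b : 'cV[R]_n) : enorm (a - b) = enorm (b - a).
Proof. by rewrite -enormN opprB. Qed.

Lemma ler_enorm_dist n (a b : 'cV[R]_n) : `|enorm a - enorm b| <= enorm (a - b).
Proof.
rewrite ler_distl; apply/andP; split.
  by have := ler_enormD (b - a) a; rewrite subrK enorm_distC; lra.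
by have := ler_enormD (a - b) b; rewrite subrK; lra.
Qed.

Definition mxl1 m n (A : 'M[R]_(m, n)) : R := \sum_i \sum_j `|A i j|.

Lemma mxl1_ge0 m n (A : 'M[R]_(m, n)) : 0 <= mxl1 A.
Proof. by apply: sumr_ge0 => i _; apply: sumr_ge0. Qed.

Lemma ler_entry_mxl1 m n (A : 'M[R]_(m, n)) i j : `|A i j| <= mxl1 A.
Proof.
rewrite /mxl1 (bigD1 i) //= (bigD1 j) //= -addrA lerDl addr_ge0 //.
  by apply: sumr_ge0.
by apply: sumr_ge0 => k _; apply: sumr_ge0.
Qed.

Lemma mxl1_row_mx m n1 n2 (A : 'M[R]_(m, n1)) (B : 'M[R]_(m, n2)) :
  mxl1 (row_mx A B) = mxl1 A + mxl1 B.
Proof.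
rewrite /mxl1 -big_split; apply: eq_bigr => i _.
by rewrite big_split_ord /=; congr (_ + _); apply: eq_bigr => j _;
  rewrite ?row_mxEl ?row_mxEr.
Qed.

Lemma enorm_mulmx_mxl1 m n (A : 'M[R]_(m, n)) v : enorm (A *m v) <= mxl1 A * enorm v.
Proof.
apply: (le_trans (enorm_le_l1 _)); rewrite /mxl1 mulr_suml; apply: ler_sum => i _.
rewrite mxE mulr_suml; apply: (le_trans (ler_norm_sum _ _ _)); apply: ler_sum => j _.
by rewrite normrM ler_wpM2l // enorm_entry_le.
Qed.

Lemma ub_opnorm m n (A : 'M[R]_(m, n)) :
  ubound [set r | exists v : 'cV[R]_n, enorm v <= 1 /\ r = enorm (A *m v)] (opnorm A).
Proof.
apply: ub_le_sup; exists (mxl1 A) => r [v [v1 ->]]; apply: (le_trans (enorm_mulmx_mxl1 _ _)).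
by rewrite -[leRHS]mulr1 ler_wpM2l // mxl1_ge0.
Qed.

Lemma opnorm_ge0 m n (A : 'M[R]_(m, n)) : 0 <= opnorm A.
Proof. by apply: ub_opnorm; exists 0; rewrite enorm0 ler01 mulmx0 enorm0. Qed.

Lemma opnorm_le_mxl1 m n (A : 'M[R]_(m, n)) : opnorm A <= mxl1 A.
Proof.
apply: ge_sup; first by exists (enorm (A *m 0)), 0; rewrite enorm0 ler01.
move=> r [v [v1 ->]]; apply: (le_trans (enorm_mulmx_mxl1 _ _)).
by rewrite -[leRHS]mulr1 ler_wpM2l // mxl1_ge0.
Qed.

Lemma enorm_mulmx_opnorm m n (A : 'M[R]_(m, n)) v : enorm (A *m v) <= opnorm A * enorm v.
Proof.
have [v0|vn0] := eqVneq (enorm v) 0.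
  by rewrite (enorm_eq0 v0) mulmx0 !enorm0 mulr0.
have vp : 0 < enorm v by rewrite lt_def vn0 enorm_ge0.
rewrite -ler_pdivrMr //; apply: ub_opnorm; exists ((enorm v)^-1 *: v); split.
  by rewrite enormZ ger0_norm ?invr_ge0 ?enorm_ge0 // mulVf.
by rewrite -scalemxAr enormZ ger0_norm ?invr_ge0 ?enorm_ge0 // mulrC.
Qed.

Lemma mlow_enorm_mulmx m n (A : 'M[R]_(m, n)) v : mlow A * enorm v <= enorm (A *m v).
Proof.
have [v0|vn0] := eqVneq (enorm v) 0; first by rewrite v0 mulr0 enorm_ge0.
have vp : 0 < enorm v by rewrite lt_def vn0 enorm_ge0.
rewrite -ler_pdivlMr //; apply: ge_sup; first by exists 0 => w; rewrite mul0r enorm_ge0.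
by move=> r /(_ v) H; rewrite ler_pdivlMr.
Qed.

Lemma mlow_ge0 m n (A : 'M[R]_(m, n)) : (0 < n)%N -> 0 <= mlow A.
Proof.
move=> n_gt0; apply: ub_le_sup; last by move=> w; rewrite mul0r enorm_ge0.
pose e : 'cV[R]_n := delta_mx (Ordinal n_gt0) ord0.
have e1 : enorm e = 1.
  rewrite /enorm (bigD1 (Ordinal n_gt0)) //= big1 ?addr0 ?mxE ?eqxx ?expr1n ?sqrtr1 //.
  by move=> i /negbTE ni; rewrite mxE ni expr0n.
by exists (enorm (A *m e)) => r /(_ e); rewrite e1 mulr1.
Qed.

Lemma mlow_set_ge0 m n (AA : set 'M[R]_(m, n)) : (0 < n)%N -> 0 <= mlow_set AA.
Proof.
move=> n_gt0; rewrite /mlow_set; set S := [set r | _].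
have [[r Sr]|S0] := pselect (exists r, S r).
  by apply: lb_le_inf; [exists r | move=> y [A _ ->]; apply: mlow_ge0].
rewrite (_ : S = set0) ?inf0 //; apply/seteqP; split=> x // Sx.
by exfalso; apply: S0; exists x.
Qed.

Lemma mlow_set_le m n (AA : set 'M[R]_(m, n)) A :
  (0 < n)%N -> AA A -> mlow_set AA <= mlow A.
Proof.
move=> n_gt0 AA_A; apply: ge_inf; last by exists A.
by exists 0 => y [B _ ->]; apply: mlow_ge0.
Qed.

End EuclideanNorm.

Section RowVectorContinuity.
Variable R : realType.

Lemma near_within_of_dist (A : set R) (x : R) (P : R -> Prop) :
  (exists2 d : R, 0 < d & forall y, `|y - x| < d -> A y -> P y) ->
  \forall y \near within A (nbhs x), P y.
Proof.
move=> [d d0 H]; rewrite near_withinE; apply/nbhs_ballP; exists d => // y /= hb Ay.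
by apply: H => //; rewrite distrC; exact: hb.
Qed.

Lemma is_derive1_of_cvg (f : R -> R) x l :
  (fun h : R => h^-1 *: (f (h *: 1 + x) - f x)) @ 0^' --> l -> is_derive x 1 f l.
Proof.
move=> H; have D : derivable f x 1 by apply: (cvgP l).
by apply: DeriveDef => //; apply: cvg_lim.
Qed.

Lemma ball_rV_l1 N (v w : 'rV[R]_N) d : 0 < d -> ball v (d / (N%:R + 1)) w ->
  \sum_i `|w ord0 i - v ord0 i| < d.
Proof.
move=> d0 bw.
have N1 : 0 < N%:R + 1 :> R by rewrite ltr_wpDl.
set t := d / _ in bw; have tp : 0 < t by rewrite /t divr_gt0.
apply: (@le_lt_trans _ _ (\sum_(i < N) t)).
  apply: ler_sum => i _; case: bw => _ /(_ ord0 i).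
  by rewrite /ball /= distrC => /ltW.
rewrite sumr_const card_ord -mulr_natl.
have -> : d = t * (N%:R + 1) by rewrite /t divfK // gt_eqF.
by rewrite mulrDr mulr1 mulrC ltrDl.
Qed.

Lemma continuous_within_rV_l1 N (A : set 'rV[R]_N) (f : 'rV[R]_N -> R) :
  (forall v, A v -> forall e, 0 < e -> exists2 d, 0 < d &
     forall w, A w -> \sum_i `|w ord0 i - v ord0 i| < d -> `|f w - f v| < e) ->
  {within A, continuous f}.
Proof.
move=> H; apply/subspace_continuousP => v Av; apply/cvgrPdist_lt => e e0.
have [d d0 Hd] := H v Av e e0.
rewrite near_withinE; apply/nbhs_ballP.
exists (d / (N%:R + 1)); first by rewrite /= divr_gt0 // ltr_wpDl.
move=> w /= bw Aw; rewrite distrC; apply: Hd => //; exact: ball_rV_l1.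
Qed.

Lemma continuous_rV_l1 N (f : 'rV[R]_N -> R) :
  (forall v : 'rV[R]_N, forall e, 0 < e -> exists2 d, 0 < d &
     forall w : 'rV[R]_N, \sum_i `|w ord0 i - v ord0 i| < d -> `|f w - f v| < e) ->
  continuous f.
Proof.
move=> H; apply/continuous_subspace_setT; apply: continuous_within_rV_l1 => v _ e e0.
by have [d d0 Hd] := H v e e0; exists d => // w _; apply: Hd.
Qed.

End RowVectorContinuity.

Section LiftedPoints.
Variables (R : realType) (c u s : nat).
Local Notation lp := (lpoint R c u s).

Definition padd (a b : lp) : lp := (plam a + plam b, px a + px b, py a + py b).
Definition pscale (t : R) (a : lp) : lp := (t *: plam a, t *: px a, t *: py a).
Definition seg (z v : lp) (t : R) : lp := padd z (pscale t v).
Definition shift (z : lp) (k : 'cV[int]_c) : lp := (plam z + intv R k, px z, py z).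
Definition flat (z : lp) : 'cV[R]_(c + u + s) := col_mx (col_mx (plam z) (px z)) (py z).
Definition unflat (v : 'rV[R]_(c + u + s)) : lp :=
  ((lsubmx (lsubmx v))^T, (rsubmx (lsubmx v))^T, (rsubmx v)^T).

Lemma plam_psub (a b : lp) : plam (psub a b) = plam a - plam b. Proof. by []. Qed.
Lemma px_psub (a b : lp) : px (psub a b) = px a - px b. Proof. by []. Qed.
Lemma py_psub (a b : lp) : py (psub a b) = py a - py b. Proof. by []. Qed.
Lemma plam_seg (z v : lp) t : plam (seg z v t) = plam z + t *: plam v. Proof. by []. Qed.

Lemma px_dapply (d : deriv9 R c u s) (v : lp) :
  px (dapply d v) = dxl d *m plam v + dxx d *m px v + dxy d *m py v.
Proof. by []. Qed.

Lemma pnormE (z : lp) : pnorm z = enorm (flat z).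
Proof. by rewrite /pnorm -(ger0_norm (enorm_ge0 (flat z))) -sqrtr_sqr /flat !enorm_col_mx. Qed.

Lemma pnorm_ge0 (z : lp) : 0 <= pnorm z.
Proof. by rewrite pnormE enorm_ge0. Qed.

Lemma pnorm_plam (z : lp) : enorm (plam z) <= pnorm z.
Proof. by rewrite pnormE /flat (le_trans _ (enorm_col_mxl _ _)) // enorm_col_mxl. Qed.

Lemma pnorm_px (z : lp) : enorm (px z) <= pnorm z.
Proof. by rewrite pnormE /flat (le_trans _ (enorm_col_mxl _ _)) // enorm_col_mxr. Qed.

Lemma pnorm_py (z : lp) : enorm (py z) <= pnorm z.
Proof. by rewrite pnormE /flat enorm_col_mxr. Qed.

Lemma flat_padd (a b : lp) : flat (padd a b) = flat a + flat b.
Proof. by rewrite /flat /padd /= !add_col_mx. Qed.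

Lemma flat_psub (a b : lp) : flat (psub a b) = flat a - flat b.
Proof. by rewrite /flat /psub /= opp_col_mx add_col_mx opp_col_mx add_col_mx. Qed.

Lemma flat_pscale t (a : lp) : flat (pscale t a) = t *: flat a.
Proof. by rewrite /flat /pscale /= !scale_col_mx. Qed.

Lemma flat_unflat v : flat (unflat v) = v^T.
Proof. by rewrite /flat /unflat /plam /px /py /= -!tr_row_mx !hsubmxK. Qed.

Lemma unflat_flat (z : lp) : unflat (flat z)^T = z.
Proof.
case: z => [[a b] d].
by rewrite /unflat /flat /plam /px /py /= !tr_col_mx !row_mxKl !row_mxKr !trmxK.
Qed.

Lemma pnormZ t (a : lp) : pnorm (pscale t a) = `|t| * pnorm a.
Proof. by rewrite !pnormE flat_pscale enormZ. Qed.

Lemma pnorm_unflat_sub v w :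
  pnorm (psub (unflat w) (unflat v)) <= \sum_i `|w ord0 i - v ord0 i|.
Proof.
rewrite pnormE flat_psub !flat_unflat; apply: (le_trans (enorm_le_l1 _)).
by apply: ler_sum => i _; rewrite !mxE.
Qed.

Lemma dapplyZ (d : deriv9 R c u s) t (a : lp) :
  dapply d (pscale t a) = pscale t (dapply d a).
Proof. by rewrite /dapply /pscale /plam /px /py /= !scalerDr -!scalemxAr. Qed.

Lemma seg0 (z v : lp) : seg z v 0 = z.
Proof.
case: z => [[a b] d]; rewrite /seg /padd /pscale /plam /px /py /=.
by congr (_, _, _); apply/matrixP => i j; rewrite !mxE; ring.
Qed.

Lemma seg1 (z q : lp) : seg z (psub q z) 1 = q.
Proof.
case: q => [[a b] d]; rewrite /seg /padd /pscale /psub /plam /px /py /=.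
by congr (_, _, _); apply/matrixP => i j; rewrite !mxE; ring.
Qed.

Lemma psub_seg (z v : lp) t : psub (seg z v t) z = pscale t v.
Proof.
by rewrite /psub /seg /padd /pscale /plam /px /py /=; congr (_, _, _);
  apply/matrixP => a b; rewrite !mxE; ring.
Qed.

Lemma psub_seg2 (z v : lp) t t0 : psub (seg z v t) (seg z v t0) = pscale (t - t0) v.
Proof.
by rewrite /psub /seg /padd /pscale /plam /px /py /=; congr (_, _, _);
  apply/matrixP => a b; rewrite !mxE; ring.
Qed.

Lemma psub_shift (w w' : lp) k : psub (shift w' k) (shift w k) = psub w' w.
Proof. by rewrite /psub /shift /plam /px /py /= opprD addrACA subrr addr0. Qed.

Lemma Dom_seg (Rr : R) (w q : lp) t : Dom Rr w -> Dom Rr q -> 0 <= t <= 1 ->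
  Dom Rr (seg w (psub q w) t).
Proof.
move=> [Dwx Dwy] [Dqx Dqy] /andP[t0 t1].
suff convex n (W Q : 'cV[R]_n) : enorm W <= Rr -> enorm Q <= Rr ->
    enorm (W + t *: (Q - W)) <= Rr by split; apply: convex.
move=> HW HQ; have -> : W + t *: (Q - W) = (1 - t) *: W + t *: Q.
  by apply/matrixP => a b; rewrite !mxE; ring.
apply: (le_trans (ler_enormD _ _)); rewrite !enormZ.
rewrite (ger0_norm t0) ger0_norm ?subr_ge0 //.
have : (1 - t) * enorm W <= (1 - t) * Rr by rewrite ler_wpM2l ?subr_ge0.
have : t * enorm Q <= t * Rr by rewrite ler_wpM2l.
lra.
Qed.

Lemma Dom_shift (Rr : R) (z : lp) k : Dom Rr z -> Dom Rr (shift z k).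
Proof. by []. Qed.

Definition Mat (d : deriv9 R c u s) : 'M[R]_(c + u + s) :=
  block_mx (block_mx (dll d) (dlx d) (dxl d) (dxx d)) (col_mx (dly d) (dxy d))
           (row_mx (dyl d) (dyx d)) (dyy d).

Lemma flat_dapply d (v : lp) : flat (dapply d v) = Mat d *m flat v.
Proof.
by rewrite /Mat /flat /dapply /plam /px /py /= mul_block_col mul_block_col mul_col_mx
  mul_row_col add_col_mx.
Qed.

Lemma Mat_ext d e : (forall X : 'cV[R]_(c + u + s), Mat d *m X = Mat e *m X) -> d = e.
Proof.
move=> H; have {H} : Mat d = Mat e.
  apply/matrixP => i j; have := H (delta_mx j 0); rewrite -!colE => /matrixP /(_ i 0).
  by rewrite !mxE.
case: d => a1 a2 a3 a4 a5 a6 a7 a8 a9; case: e => b1 b2 b3 b4 b5 b6 b7 b8 b9.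
by rewrite /Mat /= => /eq_block_mx [/eq_block_mx [-> -> -> ->] /eq_col_mx [-> ->]
  /eq_row_mx [-> ->] ->].
Qed.

Definition d9size (d : deriv9 R c u s) : R := d9dist d (Deriv9 0 0 0 0 0 0 0 0 0).

Lemma mxdist_dist m n (A B Z : 'M[R]_(m, n)) : `|mxdist A Z - mxdist B Z| <= mxdist A B.
Proof.
rewrite /mxdist -sumrB; apply: (le_trans (ler_norm_sum _ _ _)); apply: ler_sum => i _.
rewrite -sumrB; apply: (le_trans (ler_norm_sum _ _ _)); apply: ler_sum => j _.
by apply: (le_trans (ler_dist_dist _ _)); rewrite opprB addrA subrK.
Qed.

Lemma d9size_dist d e : `|d9size d - d9size e| <= d9dist d e.
Proof.
have distD (a b a' b' : R) : `|(a + b) - (a' + b')| <= `|a - a'| + `|b - b'|.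
  by rewrite opprD addrACA ler_normD.
rewrite /d9size /d9dist.
do 8! (apply: (le_trans (distD _ _ _ _)); apply: lerD; last exact: mxdist_dist).
exact: mxdist_dist.
Qed.

Lemma d9sizeE (d : deriv9 R c u s) : d9size d =
  mxl1 (dll d) + mxl1 (dlx d) + mxl1 (dly d) + mxl1 (dxl d) + mxl1 (dxx d) +
  mxl1 (dxy d) + mxl1 (dyl d) + mxl1 (dyx d) + mxl1 (dyy d).
Proof.
have mxdist0 m n (A : 'M[R]_(m, n)) : mxdist A 0 = mxl1 A.
  by apply: eq_bigr => i _; apply: eq_bigr => j _; rewrite mxE subr0.
by rewrite /d9size /d9dist /= !mxdist0.
Qed.

Lemma mxl1_blocks_le (d : deriv9 R c u s) :
  mxl1 (d_ly_fx d) <= d9size d /\ mxl1 (dxx d) <= d9size d.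
Proof.
rewrite /d_ly_fx mxl1_row_mx d9sizeE.
move: (mxl1_ge0 (dll d)) (mxl1_ge0 (dlx d)) (mxl1_ge0 (dly d)) (mxl1_ge0 (dxl d))
  (mxl1_ge0 (dxx d)) (mxl1_ge0 (dxy d)) (mxl1_ge0 (dyl d)) (mxl1_ge0 (dyx d))
  (mxl1_ge0 (dyy d)).
lra.
Qed.

End LiftedPoints.

Lemma int_eq0_of_norm_lt1 (R : realType) (n : int) : `|n%:~R : R| < 1 -> n = 0.
Proof.
rewrite -intr_norm (_ : 1 = 1%:~R) // ltr_int.
by case: n => [[|m]|m] //=; rewrite ?ltrn1.
Qed.

Lemma le0_of_forall_le_mul (R : realType) (x y : R) :
  0 <= y -> (forall e, 0 < e -> x <= e * y) -> x <= 0.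
Proof.
move=> y0 H; rewrite leNgt; apply/negP => x0.
have y1 : 0 < y + 1 by rewrite ltr_wpDl.
have := H (x / (y + 1)) (divr_gt0 x0 y1).
rewrite mulrAC ler_pdivlMr // => Hx; nra.
Qed.

Lemma exists_small_step (R : realType) (P d : R) :
  0 <= P -> 0 < d -> exists2 t : R, 0 < t <= 1 & t * P < d.
Proof.
move=> P0 d0; have P1 : 0 < P + 1 by rewrite ltr_wpDl.
set t := Num.min 1 (d / (P + 1)).
have t0 : 0 < t by rewrite lt_min ltr01 divr_gt0.
exists t; first by rewrite t0 ge_min lexx.
have : t <= d / (P + 1) by rewrite ge_min lexx orbT.
by rewrite ler_pdivlMr // => h; nra.
Qed.

Section C1Map.
Variables (R : realType) (c u s : nat) (Rr : R).
Variables (F : lpoint R c u s -> lpoint R c u s) (DF : lpoint R c u s -> deriv9 R c u s).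
Hypothesis hF : is_C1_with Rr F DF.
Local Notation lp := (lpoint R c u s).

Section Segment.
Variables (z v : lp) (a : 'cV[R]_u).
Hypothesis hseg : forall t, 0 <= t <= 1 -> Dom Rr (seg z v t).

Lemma dot_px_seg_derive t0 (ht0 : 0 <= t0 <= 1) e (he : 0 < e) :
  exists2 del, 0 < del & forall t, 0 <= t <= 1 -> `|t - t0| < del ->
   `|dot a (px (F (seg z v t))) - dot a (px (F (seg z v t0)))
      - (t - t0) * dot a (px (dapply (DF (seg z v t0)) v))| <= e * `|t - t0|.
Proof.
case: hF => hD _.
set A := enorm a; set P := pnorm v.
have A0 : 0 <= A by apply: enorm_ge0.
have P0 : 0 <= P by apply: pnorm_ge0.
set K := (A + 1) * (P + 1).
have Kp : 0 < K by rewrite mulr_gt0 // ltr_wpDl.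
have [d0 d0p H] := hD _ (hseg ht0) (e / K) (divr_gt0 he Kp).
have P1 : 0 < P + 1 by rewrite ltr_wpDl.
exists (d0 / (P + 1)); first by rewrite divr_gt0.
move=> t ht htt; set D := `|t - t0|.
have D0 : 0 <= D by apply: normr_ge0.
have DP : D * P < d0.
  apply: (le_lt_trans _ (_ : D * (P + 1) < d0)); first by rewrite ler_wpM2l // lerDl.
  by rewrite -ltr_pdivlMr.
have := H (seg z v t) (hseg ht); rewrite psub_seg2 pnormZ -/D -/P => /(_ DP).
set X := psub _ _ => W.
have -> : dot a (px (F (seg z v t))) - dot a (px (F (seg z v t0)))
      - (t - t0) * dot a (px (dapply (DF (seg z v t0)) v)) = dot a (px X).
  by rewrite /X dapplyZ /psub /pscale /px /= !dotBr dotZr.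
apply: (le_trans (cauchy_schwarz _ _)); rewrite -/A.
apply: (le_trans (ler_wpM2l A0 (pnorm_px _))).
apply: (le_trans (ler_wpM2l A0 W)).
have -> : A * (e / K * (D * P)) = (e * D) * ((A * P) / K) by ring.
rewrite -[leRHS]mulr1; apply: ler_wpM2l; first by rewrite mulr_ge0 // ltW.
by rewrite ler_pdivrMr // mul1r /K; apply: ler_pM; rewrite ?lerDl.
Qed.

Lemma dot_px_seg_is_derive (x : R) : 0 < x < 1 ->
  is_derive x 1 (fun t => dot a (px (F (seg z v t))))
    (dot a (px (dapply (DF (seg z v x)) v))).
Proof.
move=> /andP[x0 x1]; apply: is_derive1_of_cvg; apply/cvgrPdist_le => e e0.
have x01 : 0 <= x <= 1 by rewrite !ltW.
have [d d0 Hd] := dot_px_seg_derive x01 e0.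
apply: near_within_of_dist.
exists (Num.min d (Num.min x (1 - x))); first by rewrite !lt_min d0 x0 subr_gt0 x1.
move=> h; rewrite subr0 !lt_min => /and3P[hd hx h1x] hne.
have ht : 0 <= h + x <= 1.
  move: (hx) (h1x); rewrite !ltr_norml => /andP[? ?] /andP[? ?].
  by apply/andP; split; lra.
have := Hd (h + x) ht; rewrite addrK => /(_ hd).
rewrite -[h *: 1]/(h * 1) mulr1 -[_ *: _]/(_ * _) => H.
have hn0 : 0 < `|h| by rewrite normr_gt0.
rewrite -(ler_pM2l hn0) -normrM mulrBr mulrA mulrV ?mul1r ?unitfE //.
by rewrite -normrN opprB [_ * e]mulrC.
Qed.

Lemma dot_px_seg_continuous :
  {within `[0, 1], continuous (fun t => dot a (px (F (seg z v t))))}.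
Proof.
apply/subspace_continuousP => x; rewrite /= in_itv /= => x01.
apply/cvgrPdist_le => e e0.
have [d d0 Hd] := dot_px_seg_derive x01 ltr01.
apply: near_within_of_dist.
set phi := fun t => dot a (px (F (seg z v t))).
set dphi := dot a (px (dapply (DF (seg z v x)) v)).
have M0 : 0 < `|dphi| + 1 by rewrite ltr_wpDl.
exists (Num.min d (e / (`|dphi| + 1))); first by rewrite lt_min d0 divr_gt0.
move=> y; rewrite lt_min => /andP[yd ye]; rewrite /= in_itv /= => y01.
have := Hd y y01 yd; rewrite mul1r => H.
have T : `|phi y - phi x| <= `|y - x| * (`|dphi| + 1).
  rewrite mulrDr mulr1 -[phi y - phi x](subrK ((y - x) * dphi)).
  by apply: (le_trans (ler_normD _ _)); rewrite normrM addrC; apply: lerD.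
rewrite distrC; apply: (le_trans T).
by rewrite -ler_pdivlMr // ltW.
Qed.

Lemma dot_px_seg_mvt :
  exists2 tau, 0 < tau < 1 &
    dot a (px (F (seg z v 1))) - dot a (px (F (seg z v 0)))
    = dot a (px (dapply (DF (seg z v tau)) v)).
Proof.
have [||tau] := MVT (f := fun t => dot a (px (F (seg z v t))))
  (df := fun t => dot a (px (dapply (DF (seg z v t)) v))) ltr01.
- by move=> x; rewrite in_itv /=; apply: dot_px_seg_is_derive.
- exact: dot_px_seg_continuous.
- by rewrite in_itv /= subr0 mulr1 => tau01 E; exists tau.
Qed.

End Segment.

Lemma F_continuous_on (z : lp) (Dz : Dom Rr z) e (e0 : 0 < e) :
  exists2 d, 0 < d & forall w, Dom Rr w ->
    pnorm (psub w z) < d -> pnorm (psub (F w) (F z)) < e.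
Proof.
have [d0 d00 H] := hF.1 z Dz 1 ltr01.
set C := mxl1 (Mat (DF z)).
have C0 : 0 <= C := mxl1_ge0 _.
exists (Num.min d0 (e / (C + 1 + 1))); first by rewrite lt_min d00 divr_gt0 //; lra.
move=> w Dw; rewrite lt_min => /andP[wd we].
have := H w Dw wd; rewrite mul1r !pnormE !flat_psub flat_dapply flat_psub.
move: we; rewrite ltr_pdivlMr ?pnormE ?flat_psub; last by lra.
set X := flat (F w) - flat (F z); set V := flat w - flat z => we H1.
have HV : enorm (Mat (DF z) *m V) <= C * enorm V by apply: enorm_mulmx_mxl1.
have : enorm X <= enorm (X - Mat (DF z) *m V) + enorm (Mat (DF z) *m V).
  by rewrite -[X in enorm X <= _](subrK (Mat (DF z) *m V)) ler_enormD.
have V0 : 0 <= enorm V by apply: enorm_ge0.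
nra.
Qed.

Lemma DF_bounded_on_cell : Rr <= 1 ->
  exists M, forall z : lp, Dom Rr z -> (forall i, 0 <= plam z i ord0 <= 1) ->
    d9size (DF z) <= M.
Proof.
move=> Rr_le1.
pose box := [set v : 'rV[R]_(c + u + s) | forall i, (fun=> `[-1, 1]%classic) i (v ord0 i)].
pose DomE := [set v : 'rV[R]_(c + u + s) | Dom Rr (unflat v)].
have cbox : compact box := rV_compact (fun _ => @segment_compact R (-1) 1).
have cDomE : closed DomE.
  have -> : DomE = (fun v => enorm (px (unflat v))) @^-1` [set x | x <= Rr] `&`
                   (fun v => enorm (py (unflat v))) @^-1` [set x | x <= Rr].
    by apply/seteqP; split => v.
  apply: closedI; apply: preimage_closed; try exact: closed_le.
  - move=> v _; apply: continuous_rV_l1 => {}v e e0; exists e => // w Hs.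
    apply: (le_lt_trans (ler_enorm_dist _ _)); apply: (le_lt_trans _ Hs).
    exact: le_trans (pnorm_px (psub (unflat w) (unflat v))) (pnorm_unflat_sub v w).
  - move=> v _; apply: continuous_rV_l1 => {}v e e0; exists e => // w Hs.
    apply: (le_lt_trans (ler_enorm_dist _ _)); apply: (le_lt_trans _ Hs).
    exact: le_trans (pnorm_py (psub (unflat w) (unflat v))) (pnorm_unflat_sub v w).
have hc : {within box `&` DomE, continuous (fun v => d9size (DF (unflat v)))}.
  apply: continuous_within_rV_l1 => v [_ Dv] e e0; have [d d0 Hd] := hF.2 _ Dv e e0.
  exists d => // w [_ Dw] Hs.
  apply: (le_lt_trans (d9size_dist _ _)); apply: Hd => //.
  exact: (le_lt_trans (pnorm_unflat_sub _ _) Hs).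
have [M [_ HM]] := compact_bounded (continuous_compact hc (compact_closedI cbox cDomE)).
exists (M + 1) => z Dz Hz; apply: (le_trans (ler_norm _)); apply: HM; first by rewrite ltrDl.
exists ((flat z)^T); last by rewrite unflat_flat.
split; last by rewrite /DomE /= unflat_flat.
move=> i /=; rewrite in_itv /= mxE /flat -ler_norml.
case: Dz => Dx Dy; case: (split_ordP i) => j ->; rewrite ?col_mxEu ?col_mxEd; last first.
  by apply: (le_trans (enorm_entry_le _ _)); apply: le_trans Dy Rr_le1.
case: (split_ordP j) => k ->; rewrite ?col_mxEu ?col_mxEd; last first.
  by apply: (le_trans (enorm_entry_le _ _)); apply: le_trans Dx Rr_le1.
by have /andP[h0 h1] := Hz k; rewrite ger0_norm.
Qed.

Hypothesis hL : is_lift Rr F.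

(* Locally the integer vectors k' in the definition of a lift cannot jump. *)
Lemma psub_F_shift_local (w : lp) (Dw : Dom Rr w) k :
  exists2 d, 0 < d & forall w', Dom Rr w' -> pnorm (psub w' w) < d ->
    psub (F (shift w' k)) (F (shift w k)) = psub (F w') (F w).
Proof.
have h2 : 0 < 2^-1 :> R by rewrite invr_gt0.
have [d1 d10 H1] := F_continuous_on Dw h2.
have [d2 d20 H2] := F_continuous_on (Dom_shift k Dw) h2.
exists (Num.min d1 d2); first by rewrite lt_min d10 d20.
move=> w' Dw'; rewrite lt_min => /andP[wd1 wd2].
have P1 := le_lt_trans (pnorm_plam _) (H1 _ Dw' wd1).
have P2 := le_lt_trans (pnorm_plam _)
  (H2 _ (Dom_shift k Dw') (ltac:(by rewrite psub_shift))).
have [Ex1 [Ey1 [k1 El1]]] := hL Dw' k.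
have [Ex2 [Ey2 [k2 El2]]] := hL Dw k.
rewrite /shift in P2 *.
have Ek : intv R k1 = intv R k2.
  apply/matrixP => i j; rewrite (ord1 j) !mxE; congr (_%:~R); apply/eqP.
  rewrite -subr_eq0; apply/eqP/(@int_eq0_of_norm_lt1 R); rewrite intrB.
  have -> : (k1 i ord0)%:~R - (k2 i ord0)%:~R =
    ((plam (F (plam w' + intv R k, px w', py w')) - plam (F (plam w + intv R k, px w, py w)))
    - (plam (F w') - plam (F w))) i ord0 :> R.
    by rewrite El1 El2 !mxE; ring.
  apply: (le_lt_trans (enorm_entry_le _ _)); apply: (le_lt_trans (ler_enormD _ _)).
  rewrite enormN (_ : (1 : R) = 2^-1 + 2^-1); last by rewrite -div1r -splitr.
  exact: ltrD.
rewrite /psub Ex1 Ex2 Ey1 Ey2 El1 El2 Ek.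
by congr (_, _, _); apply/matrixP => a b; rewrite !mxE; ring.
Qed.

Lemma Mat_DF_shift_dir (w : lp) (Dw : Dom Rr w) k (q : lp) (Dq : Dom Rr q) :
  Mat (DF (shift w k)) *m (flat q - flat w) = Mat (DF w) *m (flat q - flat w).
Proof.
set A := DF (shift w k); set B := DF w; set D := flat q - flat w.
apply/eqP; rewrite -subr_eq0 -mulmxBl; apply/eqP; apply: enorm_eq0.
set Y := (Mat A - Mat B) *m D.
apply/eqP; rewrite eq_le enorm_ge0 andbT.
apply: (le0_of_forall_le_mul (enorm_ge0 D)) => e e0.
have e2 : 0 < e / 2 by rewrite divr_gt0.
have [d1 d10 H1] := hF.1 _ (Dom_shift k Dw) _ e2.
have [d2 d20 H2] := hF.1 _ Dw _ e2.
have [d3 d30 H3] := psub_F_shift_local Dw k.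
set d := Num.min d1 (Num.min d2 d3).
have d0 : 0 < d by rewrite !lt_min d10 d20 d30.
have [t /andP[t0 t1] tP] := exists_small_step (pnorm_ge0 (psub q w)) d0.
set w' := seg w (psub q w) t.
have Dw' : Dom Rr w' by apply: Dom_seg => //; rewrite ltW.
have Ew' : psub w' w = pscale t (psub q w) by apply: psub_seg.
have [Nd1 [Nd2 Nd3]] :
    pnorm (psub w' w) < d1 /\ pnorm (psub w' w) < d2 /\ pnorm (psub w' w) < d3.
  by rewrite Ew' pnormZ ger0_norm ?ltW //; move: tP; rewrite !lt_min => /andP[-> /andP[-> ->]].
have H1' := H1 (shift w' k) (Dom_shift k Dw') (ltac:(by rewrite psub_shift)).
have H2' := H2 w' Dw' Nd2.
rewrite psub_shift (H3 w' Dw' Nd3) Ew' in H1'; rewrite Ew' in H2'.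
rewrite !pnormE !flat_psub !flat_dapply flat_pscale flat_psub -/D in H1' H2'.
set G := flat (F w') - flat (F w) in H1' H2'.
have EY : t *: Y = (G - Mat B *m (t *: D)) - (G - Mat A *m (t *: D)).
  rewrite /Y -scalemxAr mulmxBl -!scalemxAr.
  by apply/matrixP => a b; rewrite !mxE; ring.
have : enorm (t *: Y) <= e * enorm (t *: D).
  rewrite EY; apply: (le_trans (ler_enormD _ _)); rewrite enormN.
  rewrite [e]splitr mulrDl; exact: lerD.
by move=> h; rewrite -(ler_pM2l t0) mulrCA; move: h; rewrite !enormZ (ger0_norm (ltW t0)).
Qed.

(* q0 and q1 are points of D with q1 - q0 parallel to an arbitrary X, so the
   directional identities at q0 and q1 combine into one on X. *)
Lemma DF_shift (Rr_gt0 : 0 < Rr) (w : lp) (Dw : Dom Rr w) k : DF (shift w k) = DF w.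
Proof.
apply: Mat_ext => X.
pose q0 : lp := (plam w, 0, 0).
have Dq0 : Dom Rr q0 by split; rewrite /q0 /px /py /= enorm0; apply: ltW.
set V : lp := unflat X^T.
have PV : 0 < pnorm V + 1 by rewrite ltr_wpDl ?pnorm_ge0.
set dl := Rr / (pnorm V + 1).
have dl0 : 0 < dl by rewrite divr_gt0.
have dlV : dl * pnorm V <= Rr.
  rewrite /dl mulrAC ler_pdivrMr //; apply: ler_wpM2l; first exact: ltW.
  by rewrite lerDl.
pose q1 := padd q0 (pscale dl V).
have Dq1 : Dom Rr q1.
  rewrite /Dom /q1 /padd /pscale /q0 /px /py /= !add0r !enormZ (ger0_norm (ltW dl0)).
  split; apply: le_trans dlV; apply: ler_wpM2l; rewrite ?(ltW dl0) //.
    exact: (pnorm_px V).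
  exact: (pnorm_py V).
have E0 := Mat_DF_shift_dir Dw k Dq0.
have E1 := Mat_DF_shift_dir Dw k Dq1.
have Fq1 : flat q1 - flat w = (flat q0 - flat w) + dl *: X.
  by rewrite /q1 flat_padd flat_pscale /V flat_unflat trmxK addrAC.
rewrite Fq1 (mulmxDr (Mat (DF (shift w k)))) (mulmxDr (Mat (DF w))) E0 in E1; move/addrI: E1.
by rewrite -!scalemxAr => /scalerI; apply; rewrite gt_eqF.
Qed.

Lemma DF_bounded : 0 < Rr -> Rr <= 1 -> exists M, forall z : lp, Dom Rr z -> d9size (DF z) <= M.
Proof.
move=> Rr_gt0 Rr_le1; have [M HM] := DF_bounded_on_cell Rr_le1.
exists M => z Dz.
pose k : 'cV[int]_c := \col_i (- Num.floor (plam z i ord0)).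
rewrite -(DF_shift Rr_gt0 Dz k); apply: HM => // i.
rewrite /shift /plam /= !mxE intrN.
have := real_floor_le (num_real (z.1.1 i ord0)).
have := real_floorD1_gt (num_real (z.1.1 i ord0)).
by rewrite intrD => h1 h2; apply/andP; split; lra.
Qed.

End C1Map.

Section PxIncrements.
Variables (R : realType) (c u s : nat) (Rr M : R).
Variables (F : lpoint R c u s -> lpoint R c u s) (DF : lpoint R c u s -> deriv9 R c u s).
Hypothesis hF : is_C1_with Rr F DF.
Hypothesis DF_le : forall z, Dom Rr z -> d9size (DF z) <= M.
Local Notation lp := (lpoint R c u s).

Lemma opnorm_d_ly_fx_le_sup (w : lp) : Dom Rr w ->
  opnorm (d_ly_fx (DF w)) <= sup_D Rr (fun p => opnorm (d_ly_fx (DF p))).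
Proof.
move=> Dw; apply: ub_le_sup; last by exists w.
exists M => r [p Dp ->]; apply: le_trans (opnorm_le_mxl1 _) _.
exact: le_trans (mxl1_blocks_le _).1 (DF_le Dp).
Qed.

Lemma dxx_entry_le (w : lp) i j : Dom Rr w -> `|dxx (DF w) i j| <= M.
Proof.
move=> Dw; apply: le_trans (ler_entry_mxl1 _ i j) _.
exact: le_trans (mxl1_blocks_le _).2 (DF_le Dw).
Qed.

Lemma px_increment_ly_le (z w : lp) : Dom Rr z -> Dom Rr w -> px w = px z ->
  enorm (px (F w) - px (F z)) <=
  sup_D Rr (fun p => opnorm (d_ly_fx (DF p))) *
  enorm (col_mx (plam w - plam z) (py w - py z)).
Proof.
move=> Dz Dw Exw; set S := sup_D _ _; set g := px (F w) - px (F z).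
set col := col_mx _ _.
have [t /andP[t0 t1]] := dot_px_seg_mvt hF g (fun t ht => Dom_seg Dz Dw ht).
have t01 : 0 <= t <= 1 by rewrite !ltW.
rewrite seg1 seg0 -dotBr -/g -enorm_sqr_dot.
set p := seg z (psub w z) t.
have -> : px (dapply (DF p) (psub w z)) = d_ly_fx (DF p) *m col.
  by rewrite px_dapply px_psub Exw subrr mulmx0 addr0 /d_ly_fx mul_row_col.
move=> Eg; have HS := opnorm_d_ly_fx_le_sup (Dom_seg Dz Dw t01).
have [g0|gn0] := eqVneq (enorm g) 0.
  by rewrite g0 mulr_ge0 ?enorm_ge0 // (le_trans (opnorm_ge0 _) HS).
have gp : 0 < enorm g by rewrite lt_def gn0 enorm_ge0.
rewrite -(ler_pM2l gp) -expr2 Eg.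
apply: le_trans (ler_norm _) _; apply: le_trans (cauchy_schwarz _ _) _.
rewrite ler_wpM2l ?enorm_ge0 //; apply: le_trans (enorm_mulmx_opnorm _ _) _.
by rewrite ler_wpM2r ?enorm_ge0.
Qed.

(* Mean value theorem for each coordinate separately: row i of the matrix is
   evaluated at its own intermediate point. *)
Lemma px_increment_x_rows (z w : lp) : Dom Rr z -> Dom Rr w ->
  plam w = plam z -> py w = py z ->
  exists2 t : 'I_u -> R, (forall i, 0 <= t i <= 1) &
    px (F w) - px (F z) =
    (\matrix_(i, j) dxx (DF (seg z (psub w z) (t i))) i j) *m (px w - px z).
Proof.
move=> Dz Dw El Ey.
have dapply_v d : px (dapply d (psub w z)) = dxx d *m (px w - px z).
  by rewrite px_dapply plam_psub py_psub El Ey !subrr !mulmx0 add0r addr0 px_psub.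
have /choice [t Ht] : forall i : 'I_u, exists t, 0 <= t <= 1 /\
    (px (F w) - px (F z)) i ord0 = (dxx (DF (seg z (psub w z) t)) *m (px w - px z)) i ord0.
  move=> i; have [t /andP[t0 t1] Et] :=
    dot_px_seg_mvt hF (delta_mx i 0) (fun t ht => Dom_seg Dz Dw ht).
  exists t; split; first by rewrite !ltW.
  by rewrite -[LHS]dot_delta -[RHS]dot_delta -dapply_v -Et seg1 seg0 dotBr.
exists t => [i|]; first by case: (Ht i).
apply/matrixP => i j; rewrite (ord1 j); have [_ ->] := Ht i.
by rewrite !mxE; apply: eq_bigr => l _; rewrite !mxE.
Qed.

Lemma px_increment_x_ge (z w : lp) : (0 < u)%N -> Dom Rr z -> Dom Rr w ->
  plam w = plam z -> py w = py z ->
  inf_D Rr (fun p => mlow_set (ihull (fun q => d_x_fx (DF q)) (Pset Rr p))) *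
    enorm (px w - px z) <= enorm (px (F w) - px (F z)).
Proof.
move=> u_gt0 Dz Dw El Ey; have [t t01 ->] := px_increment_x_rows Dz Dw El Ey.
set A := \matrix_(i, j) _.
have seg_P i : Pset Rr w (seg z (psub w z) (t i)).
  split; first exact: Dom_seg.
  by rewrite plam_seg plam_psub El subrr scaler0 addr0 subrr enorm0 invr_ge0.
have A_hull : ihull (fun q => d_x_fx (DF q)) (Pset Rr w) A.
  move=> i j; rewrite mxE; split.
  - apply: ge_inf; last by exists (seg z (psub w z) (t i)).
    exists (- M) => r [q [Dq _] ->].
    by have := dxx_entry_le i j Dq; rewrite ler_norml => /andP[].
  - apply: ub_le_sup; last by exists (seg z (psub w z) (t i)).
    exists M => r [q [Dq _] ->].
    by have := dxx_entry_le i j Dq; rewrite ler_norml => /andP[].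
apply: le_trans (mlow_enorm_mulmx A _); rewrite ler_wpM2r ?enorm_ge0 //.
apply: le_trans (mlow_set_le u_gt0 A_hull); apply: ge_inf; last by exists w.
by exists 0 => r [p _ ->]; apply: mlow_set_ge0.
Qed.

End PxIncrements.

Unset Implicit Arguments.
Local Close Scope classical_set_scope.

Theorem lemma4p5 (R : realType) (c u s : nat) (Rr L : R)
  (F : lpoint R c u s -> lpoint R c u s) (DF : lpoint R c u s -> deriv9 R c u s)
  (z1 z2 : lpoint R c u s) :
  (0 < c)%N -> (0 < u)%N -> (0 < s)%N ->
  0 < Rr -> Rr < 2^-1 / 2 ->
  2 * Rr / 2^-1 < L -> L < 1 ->
  is_lift Rr F -> is_C1_with Rr F DF ->
  rate_conditions0 Rr L DF ->
  Dom Rr z1 -> Dom Rr z2 -> in_Ju z2 L^-1 z1 ->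
  xi_u1P Rr L DF * enorm (px z1 - px z2) <= enorm (px (F z1) - px (F z2)).
Proof.
move=> _ u_gt0 _ Rr_gt0 Rr_small _ _ hL hF _ D1 D2 [k hk].
have Rr_le1 : Rr <= 1 by move: Rr_small; lra.
have [M DF_le] := DF_bounded hF hL Rr_gt0 Rr_le1.
pose zm : lpoint R c u s := (plam z1 + intv R k, px z2, py z1).
have Dzm : Dom Rr zm by case: D1 D2 => _ ? [? _].
rewrite /xi_u1P; set I := inf_D _ _; set S := sup_D _ _.
have hx : I * enorm (px z1 - px z2) <= enorm (px (F z1) - px (F zm)).
  have := px_increment_x_ge hF DF_le u_gt0 Dzm (Dom_shift k D1) erefl erefl.
  by have [-> _] := hL z1 D1 k.
have hly : enorm (px (F zm) - px (F z2)) <=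
    S * enorm (col_mx (plam z1 + intv R k - plam z2) (py z1 - py z2)).
  by have := px_increment_ly_le hF DF_le D2 Dzm erefl.
have S_ge0 : 0 <= S := le_trans (opnorm_ge0 _) (opnorm_d_ly_fx_le_sup DF_le D2).
have := ler_wpM2l S_ge0 hk.
have := ler_enormD (px (F z1) - px (F z2)) (- (px (F zm) - px (F z2))).
rewrite enormN opprB addrA subrK mulrBl; lra.
Qed.
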